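(* Let $\alpha:\mathbb{R}\rightarrow\mathbb{R}$ be a $C^2$ function all of whose zeros are simple, i.e. on the set $\mathcal{X}:=\{x\in\mathbb{R} \mid \alpha(x)=0\}$ one has $\alpha'(x)\neq 0$. Define $f:\mathbb{R}^2\rightarrow\mathbb{R}$ by \[ f(x,y) := \left(\alpha(x) - \left[\alpha(x)-\alpha'(x)\right]^2 y\right)^2 - A(x), \] where $A$ is any antiderivative of $x\mapsto \alpha(x)\left[\alpha(x)-\alpha'(x)\right]$. Let $\mathcal{C}(f):=\{(x,y)\mid f_x(x,y)=f_y(x,y)=0\}$ be the set of critical points of $f$. Then: (1) $\mathcal{C}(f) = \mathcal{X}\times\{0\}$; (2) at each point of $\mathcal{C}(f)$ the Hessian of $f$ is positive definite. Consequently, $f$ has local minima at the points of $\mathcal{X}\times\{0\}$ and no other critical points. *)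

From Stdlib Require Import Reals.
From Coquelicot Require Import Coquelicot.
Open Scope R_scope.

Definition C2 (a : R -> R) : Prop :=
  forall x, ex_derive a x /\ ex_derive (Derive a) x /\ continuous (Derive (Derive a)) x.

Definition fdef (a A : R -> R) (x y : R) : R :=
  (a x - (a x - Derive a x) ^ 2 * y) ^ 2 - A x.

Definition critical (F : R -> R -> R) (x y : R) : Prop :=
  is_derive (fun t => F t y) x 0 /\ is_derive (fun t => F x t) y 0.

Definition fx (F : R -> R -> R) (x y : R) : R := Derive (fun t => F t y) x.
Definition fy (F : R -> R -> R) (x y : R) : R := Derive (fun t => F x t) y.

Definition hxx F x y := Derive (fun t => fx F t y) x.
Definition hxy F x y := Derive (fun t => fx F x t) y.
Definition hyx F x y := Derive (fun t => fy F t y) x.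
Definition hyy F x y := Derive (fun t => fy F x t) y.

Definition hessian_pos_def (F : R -> R -> R) (x y : R) : Prop :=
  ex_derive (fun t => fx F t y) x /\ ex_derive (fun t => fx F x t) y /\
  ex_derive (fun t => fy F t y) x /\ ex_derive (fun t => fy F x t) y /\
  forall u w : R, (u <> 0 \/ w <> 0) ->
    0 < u * (hxx F x y * u + hyx F x y * w) + w * (hxy F x y * u + hyy F x y * w).

Definition local_min (F : R -> R -> R) (x y : R) : Prop :=
  exists eps : R, 0 < eps /\
    forall u w : R, sqrt ((u - x) ^ 2 + (w - y) ^ 2) < eps -> F x y <= F u w.

(* At a simple zero x0 of alpha the factor alpha - (alpha - alpha')^2 y of the
   y-partial forces the x-partial to reduce to -alpha (alpha - alpha'), whence
   alpha = 0 and then y = 0.  Conversely at (x0, 0) the Hessian is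
   c^2 [[3, -2c], [-2c, 2c^2]] with c = alpha'(x0), whose quadratic form is
   c^2 (2 (u - c w)^2 + u^2).  For the local minimum, A' = alpha (alpha - alpha')
   vanishes at x0 with derivative -alpha'(x0)^2 < 0, so A has a local maximum at
   x0, while the squared term of f is nonnegative and vanishes at (x0, 0). *)
From Stdlib Require Import Reals Lra Psatz.
From Coquelicot Require Import Coquelicot.
Open Scope R_scope.

Lemma Rabs_le_euclid_dist (x y u w : R) :
  Rabs (u - x) <= sqrt ((u - x) ^ 2 + (w - y) ^ 2).
Proof.
  rewrite <- sqrt_Rsqr_abs; unfold Rsqr.
  apply sqrt_le_1_alt.
  assert (0 <= (w - y) ^ 2) by apply pow2_ge_0.
  simpl; nra.
Qed.

Lemma is_derive_neg_sign (h : R -> R) (x0 l : R) :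
  is_derive h x0 l -> l < 0 -> h x0 = 0 ->
  exists delta : posreal,
    forall t, Rabs (t - x0) < delta -> h t * (t - x0) <= 0.
Proof.
  intros Hh Hl Hh0.
  apply is_derive_Reals in Hh.
  destruct (Hh (- l / 2)) as [delta Hd]; [lra|].
  exists delta; intros t Ht.
  destruct (Req_dec t x0) as [->|Htx]; [rewrite Hh0; lra|].
  assert (Hk : t - x0 <> 0) by lra.
  specialize (Hd (t - x0) Hk Ht).
  replace (x0 + (t - x0)) with t in Hd by ring; rewrite Hh0 in Hd.
  rewrite Rminus_0_r in Hd.
  destruct (Rabs_def2 _ _ Hd) as [Hup _].
  assert (Hq : h t / (t - x0) < 0) by lra.
  replace (h t * (t - x0)) with (h t / (t - x0) * ((t - x0) * (t - x0)))
    by (field; exact Hk).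
  assert (0 <= (t - x0) * (t - x0)) by nra.
  nra.
Qed.

Lemma local_max_of_derive_sign (A h : R -> R) (x0 delta : R) :
  (forall t, is_derive A t (h t)) -> h x0 = 0 ->
  (forall t, Rabs (t - x0) < delta -> h t * (t - x0) <= 0) ->
  forall u, Rabs (u - x0) < delta -> A u <= A x0.
Proof.
  intros HA Hh0 Hsign u Hu.
  destruct (MVT_gen A x0 u h) as [c [Hc HAc]].
  - intros t _; apply HA.
  - intros t _; apply continuity_pt_filterlim.
    apply (@ex_derive_continuous R_AbsRing R_NormedModule); exists (h t); apply HA.
  - unfold Rmin, Rmax in Hc.
    assert (Hcu : Rabs (c - x0) <= Rabs (u - x0)).
    { destruct (Rle_dec x0 u); unfold Rabs;
        destruct (Rcase_abs (c - x0)); destruct (Rcase_abs (u - x0)); lra. }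
    destruct (Req_dec c x0) as [->|Hcx]; [rewrite Hh0 in HAc; lra|].
    assert (Hhc := Hsign c ltac:(lra)).
    assert (Hside : 0 < (c - x0) * (u - x0)) by (destruct (Rle_dec x0 u); nra).
    assert (Hslope : h c * (u - x0) <= 0).
    { apply Rnot_lt_le; intros Hpos.
      assert (Hprod := Rmult_lt_0_compat _ _ Hpos Hside).
      assert (0 <= (u - x0) ^ 2) by apply pow2_ge_0.
      replace (h c * (u - x0) * ((c - x0) * (u - x0)))
        with (h c * (c - x0) * (u - x0) ^ 2) in Hprod by ring.
      nra. }
    lra.
Qed.

Lemma local_max_of_derive_neg (A h : R -> R) (x0 l : R) :
  (forall t, is_derive A t (h t)) -> h x0 = 0 -> is_derive h x0 l -> l < 0 ->
  exists delta : posreal, forall u, Rabs (u - x0) < delta -> A u <= A x0.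
Proof.
  intros HA Hh0 Hh Hl.
  destruct (is_derive_neg_sign h x0 l Hh Hl Hh0) as [delta Hsign].
  exists delta; exact (local_max_of_derive_sign A h x0 delta HA Hh0 Hsign).
Qed.

(* The partials of f as polynomials in u = alpha x, b = alpha' x, e = alpha'' x. *)
Definition fx_poly (u b e y : R) : R :=
  2 * (u - (u - b) ^ 2 * y) * (b - 2 * (u - b) * (b - e) * y) - u * (u - b).

Definition fy_poly (u b y : R) : R :=
  - 2 * (u - (u - b) ^ 2 * y) * (u - b) ^ 2.

Lemma fx_fy_poly_eq0 (u b e y : R) : (u = 0 -> b <> 0) ->
  fx_poly u b e y = 0 -> fy_poly u b y = 0 -> u = 0 /\ y = 0.
Proof.
  unfold fx_poly, fy_poly; intros Hsimple Hx Hy.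
  destruct (Req_dec (u - b) 0) as [Hub|Hub].
  - assert (Hu : u = 0) by (replace b with u in Hx by lra; nra).
    exfalso; apply (Hsimple Hu); lra.
  - assert (Hg : (u - b) ^ 2 <> 0) by (apply pow_nonzero; exact Hub).
    assert (Hz : u - (u - b) ^ 2 * y = 0).
    { destruct (Rmult_integral _ _ Hy) as [H|H]; [lra|contradiction]. }
    rewrite Hz in Hx.
    assert (Hu : u = 0).
    { destruct (Rmult_integral u (u - b)) as [H|H]; [lra|exact H|contradiction]. }
    split; [exact Hu|].
    destruct (Rmult_integral ((u - b) ^ 2) y) as [H|H]; [lra|contradiction|exact H].
Qed.

Lemma hessian_form_pos (c u w : R) : c <> 0 -> (u <> 0 \/ w <> 0) ->
  0 < u * (3 * c ^ 2 * u - 2 * c ^ 3 * w) + w * (- 2 * c ^ 3 * u + 2 * c ^ 4 * w).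
Proof.
  intros Hc Huw.
  replace (u * (3 * c ^ 2 * u - 2 * c ^ 3 * w) + w * (- 2 * c ^ 3 * u + 2 * c ^ 4 * w))
    with (c ^ 2 * (2 * (u - c * w) ^ 2 + u ^ 2)) by ring.
  apply Rmult_lt_0_compat; [apply pow2_gt_0; exact Hc|].
  destruct (Req_dec u 0) as [->|Hu].
  - destruct Huw as [|Hw]; [lra|].
    assert (Hcw : 0 < (c * w) ^ 2).
    { apply pow2_gt_0; apply Rmult_integral_contrapositive; split; assumption. }
    replace ((0 - c * w) ^ 2) with ((c * w) ^ 2) by ring; lra.
  - assert (0 <= (u - c * w) ^ 2) by apply pow2_ge_0.
    assert (0 < u ^ 2) by (apply pow2_gt_0; exact Hu).
    lra.
Qed.

Section Fdef.

Variables a A : R -> R.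
Hypothesis Ha : C2 a.
Hypothesis HA : forall x, is_derive A x (a x * (a x - Derive a x)).

Notation a' := (Derive a).
Notation a'' := (Derive (Derive a)).
Notation f := (fdef a A).

(* auto_derive leaves eta-expanded derivatives, which ring would treat as new atoms. *)
Ltac fold_eta := change (fun t => a t) with a in *; change (fun t => a' t) with a' in *.

Lemma ex_derive_a_a' x : ex_derive a x /\ ex_derive a' x.
Proof. destruct (Ha x) as [? [? _]]; split; assumption. Qed.

Lemma is_derive_fdef_x x y :
  is_derive (fun t => f t y) x (fx_poly (a x) (a' x) (a'' x) y).
Proof.
  destruct (ex_derive_a_a' x) as [Hd1 Hd2].
  assert (Hsq : is_derive (fun t => (a t - (a t - a' t) ^ 2 * y) ^ 2) x
    (2 * (a x - (a x - a' x) ^ 2 * y) * (a' x - 2 * (a x - a' x) * (a' x - a'' x) * y))).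
  { auto_derive; [split; auto|fold_eta; ring]. }
  exact (is_derive_minus _ _ _ _ _ Hsq (HA x)).
Qed.

Lemma is_derive_fdef_y x y : is_derive (fun t => f x t) y (fy_poly (a x) (a' x) y).
Proof. unfold fdef, fy_poly; auto_derive; [easy|ring]. Qed.

Lemma fxE x y : fx f x y = fx_poly (a x) (a' x) (a'' x) y.
Proof. exact (is_derive_unique _ _ _ (is_derive_fdef_x x y)). Qed.

Lemma fyE x y : fy f x y = fy_poly (a x) (a' x) y.
Proof. exact (is_derive_unique _ _ _ (is_derive_fdef_y x y)). Qed.

(* Only at y = 0 is fx f t y free of alpha'', which need not be differentiable. *)
Lemma is_derive_hxx x : is_derive (fun t => fx f t 0) x
  (3 * (a' x ^ 2 + a x * a'' x) - 2 * a x * a' x).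
Proof.
  destruct (ex_derive_a_a' x) as [Hd1 Hd2].
  assert (E : forall t, 3 * a t * a' t - a t ^ 2 = fx f t 0).
  { intros t; rewrite fxE; unfold fx_poly; ring. }
  apply (is_derive_ext _ _ _ _ E).
  auto_derive; [split; auto|fold_eta; ring].
Qed.

Lemma is_derive_hyx x : is_derive (fun t => fy f t 0) x
  (- 2 * a' x * (a x - a' x) ^ 2 - 4 * a x * (a x - a' x) * (a' x - a'' x)).
Proof.
  destruct (ex_derive_a_a' x) as [Hd1 Hd2].
  assert (E : forall t, - 2 * a t * (a t - a' t) ^ 2 = fy f t 0).
  { intros t; rewrite fyE; unfold fy_poly; ring. }
  apply (is_derive_ext _ _ _ _ E).
  auto_derive; [split; auto|fold_eta; ring].
Qed.

Lemma is_derive_hxy x : is_derive (fun t => fx f x t) 0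
  (- 2 * (a x - a' x) ^ 2 * a' x - 4 * a x * (a x - a' x) * (a' x - a'' x)).
Proof.
  assert (E : forall t, fx_poly (a x) (a' x) (a'' x) t = fx f x t).
  { intros t; rewrite fxE; reflexivity. }
  apply (is_derive_ext _ _ _ _ E).
  unfold fx_poly; auto_derive; [easy|ring].
Qed.

Lemma is_derive_hyy x : is_derive (fun t => fy f x t) 0 (2 * (a x - a' x) ^ 4).
Proof.
  assert (E : forall t, fy_poly (a x) (a' x) t = fy f x t).
  { intros t; rewrite fyE; reflexivity. }
  apply (is_derive_ext _ _ _ _ E).
  unfold fy_poly; auto_derive; [easy|ring].
Qed.

Hypothesis Hsimple : forall x, a x = 0 -> a' x <> 0.

Lemma critical_fdefE x y : critical f x y <-> a x = 0 /\ y = 0.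
Proof.
  split.
  - intros [Hx Hy].
    apply (fx_fy_poly_eq0 (a x) (a' x) (a'' x) y (Hsimple x)).
    + rewrite <- fxE; exact (is_derive_unique _ _ _ Hx).
    + rewrite <- fyE; exact (is_derive_unique _ _ _ Hy).
  - intros [Hx ->]; split.
    + pose proof (is_derive_fdef_x x 0) as H.
      replace (fx_poly _ _ _ _) with 0 in H by (unfold fx_poly; rewrite Hx; ring).
      exact H.
    + pose proof (is_derive_fdef_y x 0) as H.
      replace (fy_poly _ _ _) with 0 in H by (unfold fy_poly; rewrite Hx; ring).
      exact H.
Qed.

Lemma hessian_pos_def_fdef x : a x = 0 -> hessian_pos_def f x 0.
Proof.
  intros Hx.
  split; [exact (ex_intro _ _ (is_derive_hxx x))|].
  split; [exact (ex_intro _ _ (is_derive_hxy x))|].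
  split; [exact (ex_intro _ _ (is_derive_hyx x))|].
  split; [exact (ex_intro _ _ (is_derive_hyy x))|].
  intros u w Huw.
  assert (Exx : hxx f x 0 = _) by exact (is_derive_unique _ _ _ (is_derive_hxx x)).
  assert (Exy : hxy f x 0 = _) by exact (is_derive_unique _ _ _ (is_derive_hxy x)).
  assert (Eyx : hyx f x 0 = _) by exact (is_derive_unique _ _ _ (is_derive_hyx x)).
  assert (Eyy : hyy f x 0 = _) by exact (is_derive_unique _ _ _ (is_derive_hyy x)).
  rewrite Exx, Exy, Eyx, Eyy, Hx.
  pose proof (hessian_form_pos (a' x) u w (Hsimple x Hx) Huw) as Hpos.
  match goal with |- 0 < ?q => replace q with
    (u * (3 * a' x ^ 2 * u - 2 * a' x ^ 3 * w) + w * (- 2 * a' x ^ 3 * u + 2 * a' x ^ 4 * w))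
    by ring end.
  exact Hpos.
Qed.

Lemma local_min_fdef x : a x = 0 -> local_min f x 0.
Proof.
  intros Hx.
  assert (Hh : is_derive (fun t => a t * (a t - a' t)) x (- a' x ^ 2)).
  { destruct (ex_derive_a_a' x) as [Hd1 Hd2].
    auto_derive; [split; auto|]. fold_eta; rewrite Hx; ring. }
  assert (Hneg : - a' x ^ 2 < 0).
  { pose proof (pow2_gt_0 _ (Hsimple x Hx)); lra. }
  assert (Hh0 : a x * (a x - a' x) = 0) by (rewrite Hx; ring).
  destruct (local_max_of_derive_neg A _ x _ HA Hh0 Hh Hneg) as [delta Hmax].
  exists delta; split; [apply cond_pos|].
  intros u w Huw.
  pose proof (Hmax u (Rle_lt_trans _ _ _ (Rabs_le_euclid_dist x 0 u w) Huw)).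
  assert (0 <= (a u - (a u - a' u) ^ 2 * w) ^ 2) by apply pow2_ge_0.
  unfold fdef; rewrite Hx.
  lra.
Qed.

End Fdef.

Theorem lemma1 (alpha A : R -> R)
  (Halpha : C2 alpha)
  (Hsimple : forall x, alpha x = 0 -> Derive alpha x <> 0)
  (HA : forall x, is_derive A x (alpha x * (alpha x - Derive alpha x))) :
  (forall x y, critical (fdef alpha A) x y <-> (alpha x = 0 /\ y = 0)) /\
  (forall x, alpha x = 0 -> hessian_pos_def (fdef alpha A) x 0) /\
  (forall x, alpha x = 0 -> local_min (fdef alpha A) x 0).
Proof.
  split; [|split].
  - exact (critical_fdefE alpha A Halpha HA Hsimple).
  - exact (hessian_pos_def_fdef alpha A Halpha HA Hsimple).
  - exact (local_min_fdef alpha A Halpha HA Hsimple).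
Qed.
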